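(* Let $X$ and $Y$ be metric spaces and assume that $Y$ is metrically convex. Let $K\ge 0$ and let $f:X\to Y$ be a map that is co-coarsely continuous with constant $K$. Then for every $d>K$ there exists $c=c(d,K)>0$ such that for all $x\in X$ and all $r\ge d$, $$f(B_X(x,cr))^K\supseteq B_Y(f(x),r).$$
   Context: For a metric space $Z$, $B_Z(z,r)$ denotes the closed ball centered at $z$ of radius $r$. For a subset $A\subseteq Y$ and $K\ge0$, $A^K:=\{y\in Y: d_Y(y,a)\le K \text{ for some } a\in A\}$ is the closed $K$-neighborhood of $A$. A metric space $Y$ is metrically convex if for all $y_0,y_1\in Y$ and $0<\lambda<1$ there is $y_\lambda\in Y$ with $d(y_0,y_\lambda)=\lambda d(y_0,y_1)$ and $d(y_1,y_\lambda)=(1-\lambda)d(y_0,y_1)$. A map $f:X\to Y$ is co-coarsely continuous with constant $K\ge0$ if for every $d>K$ there exists $\delta=\delta(d)>0$ such that for all $x\in X$, $f(B_X(x,\delta))^K\supseteq B_Y(f(x),d)$. *)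

From Stdlib Require Import Reals.
Open Scope R_scope.

Record MetricSpace := {
  mcarrier :> Type;
  mdist : mcarrier -> mcarrier -> R;
  mdist_refl : forall x, mdist x x = 0;
  mdist_eq0 : forall x y, mdist x y = 0 -> x = y;
  mdist_sym : forall x y, mdist x y = mdist y x;
  mdist_tri : forall x y z, mdist x z <= mdist x y + mdist y z
}.

Arguments mdist {m} _ _.

Definition cball {Z : MetricSpace} (z : Z) (r : R) : Z -> Prop :=
  fun y => mdist z y <= r.

Definition nbhdK {Y : MetricSpace} (A : Y -> Prop) (K : R) : Y -> Prop :=
  fun y => exists a, A a /\ mdist y a <= K.

Definition img {X Y : Type} (f : X -> Y) (B : X -> Prop) : Y -> Prop :=
  fun y => exists x, B x /\ f x = y.

Definition subset {T : Type} (A B : T -> Prop) : Prop := forall t, A t -> B t.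

Definition metrically_convex (Y : MetricSpace) : Prop :=
  forall (y0 y1 : Y) (lam : R), 0 < lam < 1 ->
    exists yl : Y, mdist y0 yl = lam * mdist y0 y1 /\
                   mdist y1 yl = (1 - lam) * mdist y0 y1.

Definition co_coarsely_continuous {X Y : MetricSpace} (f : X -> Y) (K : R) : Prop :=
  0 <= K /\
  forall d, d > K -> exists delta, delta > 0 /\
    forall x : X, subset (cball (f x) d) (nbhdK (img f (cball x delta)) K).

(* Metric convexity lets us walk from f(x) towards a target y in steps of length d:
   each step lands within K of the image of a delta-ball, so it brings the distance
   to y down by d - K at the cost of moving delta in X.  Reaching a point at distance
   r therefore takes about r / (d - K) steps, i.e. a ball of radius linear in r. *)

From Stdlib Require Import Reals Lra Lia ZArith.
Open Scope R_scope.

Lemma subset_trans {T : Type} (A B C : T -> Prop) :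
  subset A B -> subset B C -> subset A C.
Proof. intros AB BC t At; exact (BC t (AB t At)). Qed.

Lemma cball_le {Z : MetricSpace} (z : Z) (r s : R) :
  r <= s -> subset (cball z r) (cball z s).
Proof. unfold cball; intros r_le_s y; lra. Qed.

Lemma img_subset {A B : Type} (f : A -> B) (P Q : A -> Prop) :
  subset P Q -> subset (img f P) (img f Q).
Proof. intros PQ y [x [Px <-]]; exists x; split; [apply PQ|]; auto. Qed.

Lemma nbhdK_subset {Y : MetricSpace} (A B : Y -> Prop) (K : R) :
  subset A B -> subset (nbhdK A K) (nbhdK B K).
Proof. intros AB y [a [Aa ya]]; exists a; split; [apply AB|]; auto. Qed.

Lemma metrically_convex_cut (Y : MetricSpace) : metrically_convex Y ->
  forall (y0 y1 : Y) (s : R), 0 < s < mdist y0 y1 ->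
  exists z : Y, mdist y0 z = s /\ mdist z y1 = mdist y0 y1 - s.
Proof.
  intros convY y0 y1 s [s_pos s_lt].
  destruct (convY y0 y1 (s / mdist y0 y1)) as [z [d0z d1z]].
  { split; [apply Rdiv_lt_0_compat; lra|].
    apply (Rmult_lt_reg_r (mdist y0 y1)); [lra|].
    replace (s / mdist y0 y1 * mdist y0 y1) with s by (field; lra); lra. }
  exists z; rewrite d0z, (mdist_sym _ z y1), d1z; split; field; lra.
Qed.

Lemma exists_nat_ceiling (q : R) : 0 <= q -> exists n : nat, q <= INR n <= q + 1.
Proof.
  intros q_ge0; destruct (archimed q) as [up_gt up_le].
  assert (up_pos : (0 < up q)%Z) by (apply lt_IZR; lra).
  exists (Z.to_nat (up q)).
  rewrite INR_IZR_INZ, Z2Nat.id by lia; lra.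
Qed.

Section CoCoarseIteration.

Variables (X Y : MetricSpace) (f : X -> Y) (K d delta : R).
Hypothesis convY : metrically_convex Y.
Hypothesis K_ge0 : 0 <= K.
Hypothesis K_lt_d : K < d.
Hypothesis delta_ge0 : 0 <= delta.
Hypothesis cc_d : forall x : X, subset (cball (f x) d) (nbhdK (img f (cball x delta)) K).

Lemma cocoarse_iterate (n : nat) (x : X) :
  subset (cball (f x) (d + INR n * (d - K)))
         (nbhdK (img f (cball x (INR (S n) * delta))) K).
Proof.
  revert x; induction n as [|n IH]; intros x.
  - replace (d + INR 0 * (d - K)) with d by (simpl; ring).
    replace (INR 1 * delta) with delta by (simpl; ring).
    apply cc_d.
  - intros y; unfold cball; rewrite !S_INR; intros xy_le.
    assert (n_ge0 : 0 <= INR n) by apply pos_INR.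
    destruct (Rle_or_lt (mdist (f x) y) (d + INR n * (d - K))) as [close | far].
    + destruct (IH x y close) as [a [[x' [xx' <-]] yx']].
      exists (f x'); split; [exists x'; split|]; auto.
      unfold cball in *; rewrite !S_INR in xx'; nra.
    + destruct (metrically_convex_cut Y convY (f x) y d) as [z [xz zy]]; [nra|].
      destruct (cc_d x z) as [a [[x1 [xx1 <-]] zx1]]; [unfold cball; lra|].
      assert (x1y : mdist (f x1) y <= d + INR n * (d - K)).
      { pose proof (mdist_tri _ (f x1) z y); rewrite (mdist_sym _ (f x1) z) in *; lra. }
      destruct (IH x1 y x1y) as [a [[x' [x1x' <-]] yx']].
      exists (f x'); split; [exists x'; split|]; auto.
      unfold cball in *; rewrite !S_INR in x1x'.
      pose proof (mdist_tri _ x x1 x'); lra.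
Qed.

End CoCoarseIteration.

Lemma step_count_bound (K d r : R) (n : nat) :
  0 <= K -> K < d -> d <= r -> INR n <= (r - d) / (d - K) + 1 ->
  INR (S n) <= (1 / (d - K) + 1 / d) * r.
Proof.
  intros K_ge0 K_lt_d d_le_r n_le; rewrite S_INR.
  assert (steps : INR n * (d - K) <= r - K).
  { apply (Rmult_le_compat_r (d - K)) in n_le; [|lra].
    replace (((r - d) / (d - K) + 1) * (d - K)) with (r - K) in n_le by (field; lra).
    exact n_le. }
  replace ((1 / (d - K) + 1 / d) * r) with (r / (d - K) + r / d) by (field; lra).
  assert (INR n <= r / (d - K)).
  { apply (Rmult_le_reg_r (d - K)); [lra|].
    replace (r / (d - K) * (d - K)) with r by (field; lra); lra. }
  assert (1 <= r / d).
  { apply (Rmult_le_reg_r d); [lra|].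
    replace (r / d * d) with r by (field; lra); lra. }
  lra.
Qed.

Theorem lemma2p2 (X Y : MetricSpace) (K : R) (f : X -> Y) :
  metrically_convex Y -> 0 <= K -> co_coarsely_continuous f K ->
  forall d, d > K -> exists c, c > 0 /\
    forall (x : X) (r : R), r >= d ->
      subset (cball (f x) r) (nbhdK (img f (cball x (c * r))) K).
Proof.
  intros convY K_ge0 [_ cc] d K_lt_d.
  destruct (cc d K_lt_d) as [delta [delta_pos cc_d]].
  exists (delta * (1 / (d - K) + 1 / d)); split.
  { assert (0 < 1 / (d - K)) by (apply Rdiv_lt_0_compat; lra).
    assert (0 < 1 / d) by (apply Rdiv_lt_0_compat; lra).
    apply Rmult_lt_0_compat; lra. }
  intros x r r_ge_d.
  destruct (exists_nat_ceiling ((r - d) / (d - K))) as [n [n_ge n_le]].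
  { apply Rmult_le_pos; [|left; apply Rinv_0_lt_compat]; lra. }
  apply subset_trans with (cball (f x) (d + INR n * (d - K))).
  { apply cball_le.
    apply (Rmult_le_compat_r (d - K)) in n_ge; [|lra].
    replace ((r - d) / (d - K) * (d - K)) with (r - d) in n_ge by (field; lra); lra. }
  eapply subset_trans; [apply cocoarse_iterate; auto; lra|].
  apply nbhdK_subset, img_subset, cball_le.
  rewrite Rmult_comm, Rmult_assoc.
  apply Rmult_le_compat_l; [lra|].
  apply step_count_bound; lra.
Qed.
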